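(* Let \(\mathbf{m}_i =\left(\langle x_0^{(k)}\, x_1^{(\ell)}\rangle_i\;|\;(k,\ell) \in \mathcal{E}\right)\) be a message encoding vector with unnormalized associated message encoding state \[\sigma_{\mathbf{m}_i}=\sum_{k<\ell}|B_{\langle x_0^{(k)} x_1^{(\ell)}\rangle_i}\rangle\langle B_{\langle x_0^{(k)} x_1^{(\ell)}\rangle_i}|_{k,\ell}\otimes \mathds{1}_{[N]\backslash {\{k,\ell\}}}.\] Then the largest eigenvalue satisfies \[\lambda_{\textup{max}}(\sigma_{\mathbf{m}_{i}})\leq \frac{N^2}{4} +\frac{N}{4}-\frac{1}{2}.\]
   Context: Consider an \(N\)-qubit register with sites indexed by \([N]=\{1,\dots,N\}\). The index-encoding set is \(\mathcal{E}=\{(k,\ell): k,\ell\in[N],\ k<\ell\}\), so \(|\mathcal{E}|=N(N-1)/2\). Messages are \(x=x_0x_1\in X=\{00,01,10,11\}\). A message encoding vector \(\mathbf{m}_i\in X^{\mathcal{E}}\) assigns to each pair \((k,\ell)\in\mathcal{E}\) a two-bit message, denoted \(\langle x_0^{(k)} x_1^{(\ell)}\rangle_i\). The two-qubit Bell states are \(|B_{xy}\rangle=\frac{1}{\sqrt{2}}(|0y\rangle+(-1)^x|1\bar y\rangle)\) for \(x,y\in\{0,1\}\), with \(\bar y\) the negation of \(y\). In the sum, \(|B\rangle\langle B|_{k,\ell}\) acts on qubits \(k\) and \(\ell\), and \(\mathds{1}_{[N]\backslash\{k,\ell\}}\) is the identity on all remaining qubits of the register. *)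

From HB Require Import structures.
From mathcomp Require Import all_boot all_order all_algebra all_field.
Set Implicit Arguments. Unset Strict Implicit. Unset Printing Implicit Defensive.
Import Order.TTheory GRing.Theory Num.Theory.
Local Open Scope ring_scope.

(* Computational basis of N qubits: index i : 'I_(2^N); qubit j (0-based,
   site j+1 of the paper) of basis state i is the j-th binary digit of i. *)
Definition qbit (N : nat) (i : 'I_(2 ^ N)) (j : 'I_N) : bool := odd (i %/ 2 ^ j).

(* Two-qubit basis |a b> (a on the first qubit, b on the second) as index in 'I_4. *)
Definition idx2 (a b : bool) : 'I_4 := inord (2 * a + b).

Definition bell (x y : bool) : 'cV[algC]_4 :=
  \col_(r < 4)
    ((if r == idx2 false y then 1
      else if r == idx2 true (~~ y) then (-1) ^+ x else 0) / sqrtC 2%:R).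

Definition bellproj (x y : bool) : 'M[algC]_4 :=
  bell x y *m map_mx Num.conj ((bell x y)^T).

(* Message encoding vector: assigns a two-bit message (x0, x1) to every pair
   (k, l) with k < l; values at pairs with k >= l are irrelevant. *)
Definition msg_vec (N : nat) := 'I_N -> 'I_N -> bool * bool.

(* |B><B|_{k,l} (x) 1_{[N] \ {k,l}} acting on the 2^N-dimensional register. *)
Definition pair_op (N : nat) (P : 'M[algC]_4) (k l : 'I_N) : 'M[algC]_(2 ^ N) :=
  \matrix_(i, j)
    ((if [forall q : 'I_N, (q != k) && (q != l) ==> (qbit i q == qbit j q)]
      then 1 else 0)
     * P (idx2 (qbit i k) (qbit i l)) (idx2 (qbit j k) (qbit j l))).

Definition sigma_m (N : nat) (m : msg_vec N) : 'M[algC]_(2 ^ N) :=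
  \sum_(k < N) \sum_(l < N | (k < l)%N)
     pair_op (bellproj (m k l).1 (m k l).2) k l.

From HB Require Import structures.
From mathcomp Require Import all_boot all_order all_algebra all_field.
From mathcomp Require Import ring.
Set Implicit Arguments. Unset Strict Implicit. Unset Printing Implicit Defensive.
Import Order.TTheory GRing.Theory Num.Theory.
Local Open Scope ring_scope.

(* Since sigma_m is Hermitian, its eigenvalues are bounded by the quadratic
   form of the entrywise majorant |sigma_m| on nonnegative vectors.  The term
   of a pair (k, l) has entries of modulus 1/2 exactly between basis states
   that agree outside {k, l} and whose (k, l)-qubits lie in the support of the
   Bell state; off the diagonal, each such state i is linked only to the state
   obtained by flipping qubits k and l.  Weight i by d_k(i), the number of l
   for which the (k, l)-qubits of i lie in the Bell support: flipping qubit k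
   turns d_k(i) into N - d_k(i), so a weighted Schur test bounds the (k, l)-form
   by the sum of u_i^2 N / d_k(i) over the supported i.  Symmetrizing in (k, l)
   and summing over l leaves at most N/4 per k, hence every eigenvalue is at
   most N^2/4, which is below the claimed bound as soon as N >= 2. *)

Lemma hermitian_eigenvalue_le (C : numClosedFieldType) (n : nat)
    (A : 'M[C]_n) (b a : C) :
  (forall i j, A j i = (A i j)^*) ->
  (forall u : 'I_n -> C, (forall i, 0 <= u i) ->
     \sum_i \sum_j u i * u j * `|A i j| <= b * \sum_i u i ^+ 2) ->
  eigenvalue A a -> a <= b.
Proof.
move=> A_herm A_bound /eigenvalueP [v vA v_neq0].
pose u i := `|v 0 i|.
pose q := \sum_i \sum_j v 0 i * A i j * (v 0 j)^*.
have q_eig : q = a * \sum_i u i ^+ 2.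
  rewrite /q exchange_big mulr_sumr; apply: eq_bigr => j _.
  have /matrixP/(_ 0 j) := vA; rewrite !mxE => vAj.
  by rewrite -mulr_suml vAj /u normCK mulrA.
have q_real : q \is Num.real.
  rewrite CrealE /q rmorph_sum; apply/eqP; rewrite [RHS]exchange_big.
  apply: eq_bigr => i _; rewrite rmorph_sum; apply: eq_bigr => j _.
  by rewrite !rmorphM /= conjCK -A_herm mulrC mulrA mulrAC.
have q_le : q <= b * \sum_i u i ^+ 2.
  apply: le_trans (real_ler_norm q_real) (le_trans _ (A_bound u _)); last first.
    by move=> i; apply: normr_ge0.
  apply: le_trans (ler_norm_sum _ _ _) _; apply: ler_sum => i _.
  apply: le_trans (ler_norm_sum _ _ _) _; apply: ler_sum => j _.
  by rewrite !normrM norm_conjC mulrAC.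
have [j v_j] : exists j, v 0 j != 0.
  case: (pickP (fun j => v 0 j != 0)) => [j ? | v0]; first by exists j.
  case/eqP: v_neq0; apply/matrixP => i j; rewrite ord1 mxE.
  exact/eqP/negbFE/v0.
have nv_gt0 : 0 < \sum_i u i ^+ 2.
  rewrite (bigD1 j) //= ltr_pwDl ?exprn_gt0 ?normr_gt0 //.
  by apply: sumr_ge0 => i _; rewrite exprn_ge0 // normr_ge0.
by rewrite -(ler_pM2r nv_gt0) -q_eig.
Qed.

Lemma eigenvalue0 (F : fieldType) n (a : F) : eigenvalue (0 : 'M_n) a -> a = 0.
Proof.
case/eigenvalueP=> v /esym/eqP; rewrite mulmx0 scaler_eq0.
by case/predU1P=> [// | ->].
Qed.

Lemma mulr_le_weighted_mean (F : numFieldType) (a b x y : F) :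
    0 < a -> 0 < b -> x \is Num.real -> y \is Num.real ->
  x * y <= (b / a * x ^+ 2 + a / b * y ^+ 2) / 2%:R.
Proof.
move=> a_gt0 b_gt0 x_real y_real.
have ab2_gt0 : 0 < a * b * 2%:R by rewrite !mulr_gt0 ?ltr0n.
rewrite -(ler_pM2r ab2_gt0).
have -> : x * y * (a * b * 2%:R) = (b * x) * (a * y) *+ 2 by rewrite mulr_natr; ring.
have -> : (b / a * x ^+ 2 + a / b * y ^+ 2) / 2%:R * (a * b * 2%:R)
    = (b * x) ^+ 2 + (a * y) ^+ 2.
  by field; rewrite !gt_eqF.
by apply: (real_leif_mean_square_scaled _ _).1; apply: rpredM => //; apply: gtr0_real.
Qed.

Lemma weighted_schur_bound (F : numFieldType) (I : finType)
    (R : I -> I -> F) (w u : I -> F) :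
    (forall i j, R j i = R i j) -> (forall i j, 0 <= R i j) ->
    (forall i j, R i j != 0 -> 0 < w i) -> (forall i, u i \is Num.real) ->
  \sum_i \sum_j R i j * (u i * u j)
    <= \sum_i u i ^+ 2 * \sum_j R i j * (w j / w i).
Proof.
move=> R_sym R_ge0 w_gt0 u_real.
pose X i j := R i j * (w j / w i) * u i ^+ 2.
have X_bound i j : R i j * (u i * u j) <= (X i j + X j i) / 2%:R.
  have [R0|Rn0] := eqVneq (R i j) 0.
    by rewrite /X R0 R_sym R0 !mul0r add0r mul0r.
  have Rn0' : R j i != 0 by rewrite R_sym.
  have -> : (X i j + X j i) / 2%:R
      = R i j * ((w j / w i * u i ^+ 2 + w i / w j * u j ^+ 2) / 2%:R).
    by rewrite /X R_sym; ring.
  rewrite ler_wpM2l //; apply: mulr_le_weighted_mean => //.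
  - exact: w_gt0 Rn0.
  - exact: w_gt0 Rn0'.
apply: le_trans (_ : _ <= \sum_i \sum_j (X i j + X j i) / 2%:R) _.
  by apply: ler_sum => i _; apply: ler_sum => j _.
have -> : \sum_i \sum_j (X i j + X j i) / 2%:R = \sum_i \sum_j X i j.
  under eq_bigr => i _ do rewrite -mulr_suml big_split /=.
  by rewrite -mulr_suml big_split /= [X in _ + X]exchange_big /=; field.
apply: ler_sum => i _; rewrite mulr_sumr.
by apply: ler_sum => j _; rewrite /X mulrC.
Qed.

Lemma sum_ltn_pairs (V : nmodType) (n : nat) (F : 'I_n -> 'I_n -> V) :
  \sum_(k < n) \sum_(l < n | (k < l)%N) (F k l + F l k)
  = \sum_(k < n) \sum_(l < n | l != k) F k l.
Proof.
have split_neq (k : 'I_n) : \sum_(l | l != k) F k l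
    = \sum_(l < n | (k < l)%N) F k l + \sum_(l < n | (l < k)%N) F k l.
  rewrite (bigID (fun l : 'I_n => (k < l)%N)) /=.
  by congr (_ + _); apply: eq_bigl => l; rewrite -val_eqE /=; case: ltngtP.
under eq_bigr => k _ do rewrite big_split.
under [RHS]eq_bigr => k _ do rewrite split_neq.
rewrite !big_split /=; congr (_ + _).
by rewrite (exchange_big_dep predT).
Qed.

Lemma nat_bits_inj (N i j : nat) : (i < 2 ^ N)%N -> (j < 2 ^ N)%N ->
  (forall q, (q < N)%N -> odd (i %/ 2 ^ q) = odd (j %/ 2 ^ q)) -> i = j.
Proof.
elim: N i j => [|N IHN] i j i_lt j_lt bits_eq.
  by move: i_lt j_lt; rewrite expn0 !ltnS !leqn0 => /eqP -> /eqP ->.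
have odd_eq := bits_eq 0%N isT; rewrite expn0 !divn1 in odd_eq.
have half_eq : i./2 = j./2.
  apply: IHN; rewrite -?divn2 ?ltn_divLR -?expnSr // => q q_lt.
  by rewrite -!divnMA -expnS; apply: bits_eq.
by rewrite -[i]odd_double_half -[j]odd_double_half odd_eq half_eq.
Qed.

Lemma qbit_inj N (i j : 'I_(2 ^ N)) : (forall q, qbit i q = qbit j q) -> i = j.
Proof.
move=> bits_eq; apply: val_inj => /=.
exact: nat_bits_inj (ltn_ord i) (ltn_ord j) (fun q q_lt => bits_eq (Ordinal q_lt)).
Qed.

Lemma bell_real x y r : bell x y r 0 \is Num.real.
Proof.
rewrite mxE rpredM //; last by rewrite rpredV ger0_real // sqrtC_ge0 ler0n.
by case: ifP => _; rewrite ?rpred1 //; case: ifP => _; rewrite ?rpredX ?rpredN ?rpred1 ?rpred0.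
Qed.

Lemma bellprojE x y r c : bellproj x y r c = bell x y r 0 * bell x y c 0.
Proof. by move: (bell_real x y c); rewrite !mxE big_ord1 !mxE => /conj_Creal ->. Qed.

Lemma bellproj_hermitian x y r c : bellproj x y c r = (bellproj x y r c)^*.
Proof. by rewrite !bellprojE conj_Creal ?rpredM ?bell_real // mulrC. Qed.

Lemma norm_bell x y a b :
  `|bell x y (idx2 a b) 0| = (a (+) b == y)%:R / sqrtC 2%:R.
Proof.
rewrite mxE normrM normfV [`|sqrtC _|]ger0_norm ?sqrtC_ge0 ?ler0n //; congr (_ / _).
rewrite /idx2 -!val_eqE /= !inordK; try by case: a; case: b; case: y.
by case: a; case: b; case: y; rewrite /= ?normr1 ?normr0 ?normrX ?normrN1 ?expr1n.
Qed.

Lemma norm_bellproj x y a b c d :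
  `|bellproj x y (idx2 a b) (idx2 c d)|
    = ((a (+) b == y) && (c (+) d == y))%:R / 2%:R.
Proof.
rewrite bellprojE normrM !norm_bell mulrACA -invfM -expr2 sqrtCK.
by rewrite -natrM mulnb.
Qed.

Definition agree_off N (k l : 'I_N) (i j : 'I_(2 ^ N)) : bool :=
  [forall q, (q != k) && (q != l) ==> (qbit i q == qbit j q)].

Lemma pair_opE N (P : 'M[algC]_4) (k l : 'I_N) i j :
  pair_op P k l i j = (agree_off k l i j)%:R
    * P (idx2 (qbit i k) (qbit i l)) (idx2 (qbit j k) (qbit j l)).
Proof. by rewrite mxE -/(agree_off k l i j); case: agree_off. Qed.

Lemma agree_off_sym N (k l : 'I_N) i j : agree_off k l j i = agree_off k l i j.
Proof. by apply: eq_forallb => q; rewrite [qbit j q == _]eq_sym. Qed.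

Lemma agree_offC N (k l : 'I_N) i j : agree_off l k i j = agree_off k l i j.
Proof. by apply: eq_forallb => q; rewrite andbC. Qed.

Section BellPairs.
Variables (N : nat) (m : msg_vec N).

Definition pair_msg (k l : 'I_N) : bool * bool :=
  if (k < l)%N then m k l else m l k.

(* The (k, l)-qubits of the basis state i lie in the support
   {|0 y>, |1 ~y>} of the Bell state |B_xy> carried by the pair. *)
Definition on_bell (k l : 'I_N) (i : 'I_(2 ^ N)) : bool :=
  qbit i k (+) qbit i l == (pair_msg k l).2.

Definition linked (k l : 'I_N) (i j : 'I_(2 ^ N)) : bool :=
  [&& agree_off k l i j, on_bell k l i & on_bell k l j].

Definition bell_degree (k : 'I_N) (i : 'I_(2 ^ N)) : nat :=
  \sum_(l < N | l != k) on_bell k l i.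

Lemma pair_msgC k l : pair_msg l k = pair_msg k l.
Proof. by rewrite /pair_msg; case: ltngtP => // /val_inj ->. Qed.

Lemma on_bellC k l i : on_bell l k i = on_bell k l i.
Proof. by rewrite /on_bell pair_msgC addbC. Qed.

Lemma linkedC k l i j : linked l k i j = linked k l i j.
Proof. by rewrite /linked agree_offC !(on_bellC k l). Qed.

Lemma linked_sym k l i j : linked k l j i = linked k l i j.
Proof. by rewrite /linked agree_off_sym [on_bell k l j && _]andbC. Qed.

Lemma linked_refl k l i : linked k l i i = on_bell k l i.
Proof.
rewrite /linked andbb andb_idl // => _.
by apply/forallP => q; rewrite eqxx implybT.
Qed.

Lemma linked_flip k l i j : linked k l i j -> i != j ->
  qbit j k = ~~ qbit i k /\ qbit j l = ~~ qbit i l.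
Proof.
case/and3P=> /forallP agree on_i on_j neq_ij.
have flip_k : qbit j k = ~~ qbit i k.
  apply/eqP; apply: contraNT neq_ij => /negPf same_k; apply/eqP/qbit_inj => q.
  have {}same_k : qbit i k = qbit j k by move: same_k; case: (qbit j k); case: (qbit i k).
  case: (eqVneq q k) => [-> // | q_k]; case: (eqVneq q l) => [-> | q_l].
    move: on_i on_j; rewrite /on_bell same_k.
    by case: (qbit j k); case: (qbit i l); case: (qbit j l); case: (pair_msg k l).2.
  by apply/eqP; have := agree q; rewrite q_k q_l.
split=> //; move: on_i on_j; rewrite /on_bell flip_k.
by case: (qbit i k); case: (qbit i l); case: (qbit j l); case: (pair_msg k l).2.
Qed.

Lemma linked_unique k l i j h :
  linked k l i j -> linked k l i h -> i != j -> i != h -> j = h.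
Proof.
move=> l_ij l_ih neq_ij neq_ih.
have [j_k j_l] := linked_flip l_ij neq_ij; have [h_k h_l] := linked_flip l_ih neq_ih.
case/and3P: l_ij => /forallP agree_j _ _; case/and3P: l_ih => /forallP agree_h _ _.
apply: qbit_inj => q; case: (eqVneq q k) => [-> | q_k]; first by rewrite j_k h_k.
case: (eqVneq q l) => [-> | q_l]; first by rewrite j_l h_l.
by have := agree_j q; have := agree_h q; rewrite q_k q_l => /eqP <- /eqP <-.
Qed.

Lemma sum1_neq k : (\sum_(l < N | l != k) 1 = N.-1)%N.
Proof. by rewrite sum1_card cardC1 card_ord. Qed.

Lemma bell_degree_le k i : (bell_degree k i <= N)%N.
Proof.
apply: leq_trans (leq_pred N); rewrite -(sum1_neq k).
by apply: leq_sum => l _; apply: leq_b1.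
Qed.

Lemma bell_degree_gt0 k l i : l != k -> on_bell k l i -> (0 < bell_degree k i)%N.
Proof. by move=> neq_lk on_i; rewrite /bell_degree (bigD1 l) //= on_i. Qed.

Lemma bell_degree_linked k l i j : l != k -> linked k l i j -> i != j ->
  (bell_degree k i + bell_degree k j = N)%N.
Proof.
move=> neq_lk l_ij neq_ij; have [flip_k _] := linked_flip l_ij neq_ij.
case/and3P: (l_ij) => /forallP agree on_i on_j.
rewrite /bell_degree -big_split /=.
transitivity (\sum_(l' < N | l' != k) (1 + (l' == l)))%N.
  apply: eq_bigr => l' neq_l'k; case: (eqVneq l' l) => [-> | neq_l'l].
    by rewrite on_i on_j.
  have same_l' : qbit j l' = qbit i l'.
    by apply/esym/eqP; have := agree l'; rewrite neq_l'k neq_l'l.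
  rewrite /on_bell flip_k same_l'.
  by case: (qbit i k); case: (qbit i l'); case: (pair_msg k l').2.
rewrite big_split /= sum1_neq (bigD1 l) //= eqxx big1 => [|l' /andP [_ /negPf ->]] //.
by rewrite addn0 addn1 prednK // (leq_ltn_trans _ (ltn_ord k)).
Qed.

Lemma linked_degree_sum_le k l i : l != k ->
  (\sum_j linked k l i j * bell_degree k j <= on_bell k l i * N)%N.
Proof.
move=> neq_lk; have [on_i | off_i] := boolP (on_bell k l i); last first.
  by rewrite big1 // => j _; rewrite /linked (negPf off_i) andbF.
rewrite mul1n (bigD1 i) //= linked_refl on_i mul1n.
have [j /andP [neq_ji l_ij] | no_link] := pickP [pred j | (j != i) && linked k l i j].
  have neq_ij : i != j by rewrite eq_sym.
  rewrite (bigD1 j) //= l_ij mul1n addnA (bell_degree_linked neq_lk l_ij neq_ij) big1 ?addn0 //.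
  move=> h /andP [neq_hi neq_hj]; case l_ih: (linked k l i h) => //.
  have neq_ih : i != h by rewrite eq_sym.
  by rewrite (linked_unique l_ij l_ih neq_ij neq_ih) eqxx in neq_hj.
rewrite big1 ?addn0 ?bell_degree_le // => j neq_ji.
by have := no_link j; rewrite /= neq_ji /= => ->.
Qed.
End BellPairs.

Lemma linked_quadratic_le N (m : msg_vec N) k l (u : 'I_(2 ^ N) -> algC) :
    l != k -> (forall i, 0 <= u i) ->
  \sum_i \sum_j (linked m k l i j)%:R * (u i * u j)
    <= \sum_i u i ^+ 2 * ((on_bell m k l i * N)%:R / (bell_degree m k i)%:R).
Proof.
move=> neq_lk u_ge0.
apply: le_trans (weighted_schur_bound (w := fun i => (bell_degree m k i)%:R) _ _ _ _) _.
- by move=> i j; rewrite linked_sym.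
- by move=> i j; apply: ler0n.
- move=> i j; rewrite pnatr_eq0 eqb0 negbK => /and3P [_ on_i _].
  by rewrite ltr0n (bell_degree_gt0 neq_lk on_i).
- by move=> i; apply: ger0_real.
apply: ler_sum => i _; rewrite ler_wpM2l ?exprn_ge0 //.
under eq_bigr => j _ do rewrite mulrA.
rewrite -mulr_suml ler_wpM2r ?invr_ge0 ?ler0n //.
under eq_bigr => j _ do rewrite -natrM.
by rewrite -natr_sum ler_nat linked_degree_sum_le.
Qed.

Lemma bell_degree_weights_le N (m : msg_vec N) i :
  \sum_(k < N) \sum_(l < N | l != k) (on_bell m k l i * N)%:R / (bell_degree m k i)%:R
    <= N%:R ^+ 2 :> algC.
Proof.
apply: le_trans (_ : _ <= \sum_(k < N) N%:R) _; last first.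
  by rewrite sumr_const card_ord expr2 mulr_natr.
apply: ler_sum => k _; rewrite -mulr_suml -natr_sum -big_distrl /= natrM -/(bell_degree m k i).
have [-> | d_neq0] := eqVneq (bell_degree m k i) 0%N; first by rewrite !mul0r ler0n.
by rewrite mulrAC divff ?mul1r ?pnatr_eq0.
Qed.

Lemma linked_majorant_quadratic_le N (m : msg_vec N) (u : 'I_(2 ^ N) -> algC) :
    (forall i, 0 <= u i) ->
  \sum_i \sum_j u i * u j
      * (\sum_(k < N) \sum_(l < N | (k < l)%N) (linked m k l i j)%:R / 2%:R)
    <= N%:R ^+ 2 / 4%:R * \sum_i u i ^+ 2.
Proof.
move=> u_ge0.
pose Q k l := \sum_i \sum_j (linked m k l i j)%:R * (u i * u j).
pose c k l i : algC := (on_bell m k l i * N)%:R / (bell_degree m k i)%:R.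
have QC k l : Q l k = Q k l.
  by apply: eq_bigr => i _; apply: eq_bigr => j _; rewrite linkedC.
have -> : \sum_i \sum_j u i * u j
      * (\sum_(k < N) \sum_(l < N | (k < l)%N) (linked m k l i j)%:R / 2%:R)
    = (\sum_(k < N) \sum_(l < N | (k < l)%N) (Q k l + Q l k)) / 4%:R.
  transitivity (\sum_i \sum_j \sum_(k < N) \sum_(l < N | (k < l)%N)
                  (linked m k l i j)%:R * (u i * u j) / 2%:R).
    apply: eq_bigr => i _; apply: eq_bigr => j _; rewrite mulr_sumr.
    by apply: eq_bigr => k _; rewrite mulr_sumr; apply: eq_bigr => l _; ring.
  under eq_bigr => i _ do rewrite exchange_big.
  rewrite exchange_big mulr_suml; apply: eq_bigr => k _.
  under eq_bigr => i _ do rewrite exchange_big.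
  rewrite exchange_big mulr_suml; apply: eq_bigr => l _.
  have -> : (Q k l + Q l k) / 4%:R = Q k l / 2%:R by rewrite QC; field.
  by rewrite mulr_suml; apply: eq_bigr => i _; rewrite mulr_suml.
rewrite sum_ltn_pairs.
apply: le_trans (_ : _ <= (\sum_(k < N) \sum_(l < N | l != k)
                            \sum_i u i ^+ 2 * c k l i) / 4%:R) _.
  rewrite ler_wpM2r ?invr_ge0 ?ler0n //.
  by apply: ler_sum => k _; apply: ler_sum => l neq_lk; apply: linked_quadratic_le.
under eq_bigr => k _ do rewrite exchange_big.
rewrite exchange_big mulr_suml mulr_sumr; apply: ler_sum => i _.
under eq_bigr => k _ do rewrite -mulr_sumr.
rewrite -mulr_sumr -mulrA [_ * u i ^+ 2]mulrC ler_wpM2l ?exprn_ge0 //.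
rewrite ler_wpM2r ?invr_ge0 ?ler0n //.
exact: bell_degree_weights_le.
Qed.

Lemma norm_pair_op_bellproj N (m : msg_vec N) (k l : 'I_N) i j : (k < l)%N ->
  `|pair_op (bellproj (m k l).1 (m k l).2) k l i j| = (linked m k l i j)%:R / 2%:R.
Proof.
move=> lt_kl; rewrite pair_opE normrM norm_bellproj normr_nat mulrA -natrM mulnb.
by rewrite /linked /on_bell /pair_msg lt_kl.
Qed.

Lemma sigma_m_hermitian N (m : msg_vec N) i j : sigma_m m j i = (sigma_m m i j)^*.
Proof.
rewrite !summxE rmorph_sum; apply: eq_bigr => k _.
rewrite !summxE rmorph_sum; apply: eq_bigr => l _.
by rewrite !pair_opE rmorphM /= conjC_nat agree_off_sym bellproj_hermitian.
Qed.

Lemma norm_sigma_m_le N (m : msg_vec N) i j :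
  `|sigma_m m i j|
    <= \sum_(k < N) \sum_(l < N | (k < l)%N) (linked m k l i j)%:R / 2%:R.
Proof.
rewrite summxE; apply: le_trans (ler_norm_sum _ _ _) _; apply: ler_sum => k _.
rewrite summxE; apply: le_trans (ler_norm_sum _ _ _) _; apply: ler_sum => l lt_kl.
by rewrite norm_pair_op_bellproj.
Qed.

Lemma sigma_m_eigenvalue_le N (m : msg_vec N) a :
  eigenvalue (sigma_m m) a -> a <= N%:R ^+ 2 / 4%:R.
Proof.
apply: hermitian_eigenvalue_le => [i j | u u_ge0]; first exact: sigma_m_hermitian.
apply: le_trans (linked_majorant_quadratic_le m u_ge0).
apply: ler_sum => i _; apply: ler_sum => j _.
by rewrite ler_wpM2l ?mulr_ge0 ?norm_sigma_m_le.
Qed.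

Lemma sigma_m_ord1 (m : msg_vec 1) : sigma_m m = 0.
Proof.
rewrite /sigma_m big1 // => k _; rewrite big_pred0 // => l.
by rewrite (ord1 k) (ord1 l).
Qed.

Theorem lemma3 (N : nat) (hN : (0 < N)%N) (m : msg_vec N) (a : algC) :
  eigenvalue (sigma_m m) a ->
  a <= (N%:R ^+ 2) / 4%:R + N%:R / 4%:R - 1 / 2%:R.
Proof.
case: N hN m a => [// | [| n]] _ m a.
  (* For N = 1 the claimed bound is 0, below N^2/4, but sigma_m is empty. *)
  rewrite sigma_m_ord1 => /eigenvalue0 ->.
  suff -> : 1%:R ^+ 2 / 4%:R + 1%:R / 4%:R - 1 / 2%:R = 0 :> algC by [].
  by field.
move/sigma_m_eigenvalue_le/le_trans; apply; rewrite -subr_ge0.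
have -> : n.+2%:R ^+ 2 / 4%:R + n.+2%:R / 4%:R - 1 / 2%:R - n.+2%:R ^+ 2 / 4%:R
    = n%:R / 4%:R :> algC by rewrite -addn2 natrD; field.
by rewrite divr_ge0 ?ler0n.
Qed.
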